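(* Let $\mathbf{M}=(m_{i,j})$ be a $k\times n$ binary matrix with $k \le n$. For $i\in[k]$ let $R_i=\{j\in[n]: m_{i,j}\neq 0\}$ be the support of row $i$, and for $j\in[n]$ let $C_j=\{i\in[k]: m_{i,j}\neq 0\}$ be the support of column $j$. Then the condition $$\Big|\bigcup_{j\in J} C_j\Big| \ge |J| \quad\text{for every } J\subseteq[n] \text{ with } |J|\le k$$ is equivalent to the condition $$\Big|\bigcup_{i\in I} R_i\Big| \ge n-k+|I| \quad\text{for every nonempty } I\subseteq[k].$$
   Context: $[n]=\{1,\dots,n\}$. *)

From mathcomp Require Import all_boot all_algebra.
Set Implicit Arguments.
Unset Strict Implicit.
Unset Printing Implicit Defensive.

(* A k x n binary matrix is represented as 'M[bool]_(k, n); entry m_{i,j} is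
   nonzero iff M i j = true.  Indices [k] and [n] are 'I_k and 'I_n. *)

Definition row_supp (k n : nat) (M : 'M[bool]_(k, n)) (i : 'I_k) : {set 'I_n} :=
  [set j | M i j].

Definition col_supp (k n : nat) (M : 'M[bool]_(k, n)) (j : 'I_n) : {set 'I_k} :=
  [set i | M i j].

From mathcomp Require Import all_boot all_algebra.
From mathcomp Require Import zify.

(* Both conditions forbid large zero blocks I x J of M, and "the columns J
   meet no row of I" is the same statement as "the rows I meet no column of J".
   Hall's condition applied to (a k-subset of) the complement of the row
   support of I gives the row condition; the row condition applied to the
   complement of the column support of J gives Hall's condition. *)

Lemma exists_subset_card {T : finType} {B : {set T}} {m : nat} :
  (m <= #|B|)%N -> exists2 A : {set T}, A \subset B & #|A| = m.
Proof.
move=> le_mB.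
have : (0 < #|[set A : {set T} | A \subset B & #|A| == m]|)%N.
  by rewrite cards_draws bin_gt0.
by case/card_gt0P => A; rewrite inE => /andP [sAB /eqP cardA]; exists A.
Qed.

Lemma card_setC_ord {m : nat} (A : {set 'I_m}) : #|~: A| = (m - #|A|)%N.
Proof. by rewrite cardsCs setCK card_ord. Qed.

Lemma card_set_ord {m : nat} (A : {set 'I_m}) : (#|A| <= m)%N.
Proof. by rewrite -[X in (_ <= X)%N]card_ord max_card. Qed.

Section ZeroBlock.

Variables (k n : nat) (M : 'M[bool]_(k, n)).
Hypothesis le_kn : (k <= n)%N.
Implicit Types (I : {set 'I_k}) (J : {set 'I_n}).

Lemma col_supp_zero_block I J :
  (\bigcup_(j in J) col_supp M j \subset ~: I) = [forall i in I, forall j in J, ~~ M i j].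
Proof.
apply/bigcupsP/forall_inP => [sub i iI | zero j jJ].
- apply/forall_inP => j jJ; apply: contraTN iI => Mij.
  by have := subsetP (sub j jJ) i; rewrite !inE Mij => /(_ isT).
- by apply/subsetP => i; rewrite !inE; apply: contraTN => iI; exact: (forall_inP (zero i iI)).
Qed.

Lemma row_supp_zero_block I J :
  (\bigcup_(i in I) row_supp M i \subset ~: J) = [forall i in I, forall j in J, ~~ M i j].
Proof.
apply/bigcupsP/forall_inP => [sub i iI | zero i iI].
- apply/forall_inP => j jJ; apply: contraTN jJ => Mij.
  by have := subsetP (sub i iI) j; rewrite !inE Mij => /(_ isT).
- by apply/subsetP => j; rewrite !inE; apply: contraTN => jJ; exact: (forall_inP (zero i iI)).
Qed.

Lemma col_supp_subsetC_row_supp I J :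
  (\bigcup_(j in J) col_supp M j \subset ~: I) = (\bigcup_(i in I) row_supp M i \subset ~: J).
Proof. by rewrite col_supp_zero_block row_supp_zero_block. Qed.

Lemma row_supp_subsetC_col_suppC J :
  \bigcup_(i in ~: \bigcup_(j in J) col_supp M j) row_supp M i \subset ~: J.
Proof. by rewrite -col_supp_subsetC_row_supp setCK. Qed.

Lemma hall_cols_row_supp :
  (forall J, (#|J| <= k)%N -> (#|J| <= #|\bigcup_(j in J) col_supp M j|)%N) ->
  forall I, I != set0 -> (n - k + #|I| <= #|\bigcup_(i in I) row_supp M i|)%N.
Proof.
move=> hall I nzI; set U := \bigcup_(i in I) row_supp M i.
have [J sJU cardJ] := exists_subset_card (geq_minl #|~: U| k).
have zeroJI : \bigcup_(j in J) col_supp M j \subset ~: I.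
  by rewrite col_supp_subsetC_row_supp -/U subsetC.
have le_Jk : (#|J| <= k)%N by rewrite cardJ geq_minr.
have := leq_trans (hall J le_Jk) (subset_leq_card zeroJI).
move: nzI; rewrite -card_gt0 cardJ !card_setC_ord.
by have := card_set_ord U; have := card_set_ord I; lia.
Qed.

Lemma row_supp_hall_cols :
  (forall I, I != set0 -> (n - k + #|I| <= #|\bigcup_(i in I) row_supp M i|)%N) ->
  forall J, (#|J| <= k)%N -> (#|J| <= #|\bigcup_(j in J) col_supp M j|)%N.
Proof.
move=> hrow J le_Jk; set V := \bigcup_(j in J) col_supp M j.
have := card_set_ord J; have := card_set_ord V.
have [VC0 | nzVC] := eqVneq (~: V) set0.
  by move: (card_setC_ord V); rewrite VC0 cards0; lia.
have := leq_trans (hrow _ nzVC) (subset_leq_card (row_supp_subsetC_col_suppC J)).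
by rewrite !card_setC_ord; lia.
Qed.

End ZeroBlock.

Theorem lemma4 (k n : nat) (M : 'M[bool]_(k, n)) (Hkn : (k <= n)%N) :
  (forall J : {set 'I_n}, (#|J| <= k)%N ->
     (#|J| <= #|\bigcup_(j in J) col_supp M j|)%N)
  <->
  (forall I : {set 'I_k}, I != set0 ->
     (n - k + #|I| <= #|\bigcup_(i in I) row_supp M i|)%N).
Proof.
split; [exact: hall_cols_row_supp | exact: row_supp_hall_cols].
Qed.
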